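(* Let $\Gamma=(V,E)$ be a simple, acyclic, modular directed graph and let $F\subseteq E$ be a complete connected set of edges. Let $u,v\in V(F)$ be such that there is no directed path in $\Gamma(F)$ from $u$ to $v$. Then (1) there exists an edge $f\in F$ with $t(f)=v$, and (2) there exists an edge $e\in F$ with $h(e)=u$.
   Context: Each edge $e$ has tail $t(e)$ and head $h(e)$; simple means edges with the same tail and head coincide; acyclic means no directed path of positive length from a vertex to itself. A directed path is $e_1,\dots,e_k$ with $t(e_{i+1})=h(e_i)$; a vertex is joined to itself by the path of length $0$. $\Gamma$ is modular if for any two distinct edges $e_1,e_2$ with a common tail there exist edges $f_1,f_2$ with a common head and $h(e_i)=t(f_i)$, and for any two distinct edges $h_1,h_2$ with a common head there exist edges $g_1,g_2$ with a common tail and $h(g_i)=t(h_i)$. D-operation: from distinct edges $e_1,e_2$ with a common tail, any pair $f_1,f_2$ with a common head and $h(e_i)=t(f_i)$ is obtained; U-operation: from distinct edges $f_1',f_2'$ with a common head, any pair $e_1',e_2'$ with a common tail and $h(e_i')=t(f_i')$ is obtained. $F$ is complete if all results of D- and U-operations applied to edges of $F$ lie in $F$. $V(F)$ is the set of heads and tails of edges of $F$, and $\Gamma(F)$ is the subgraph with vertex set $V(F)$ and edge set $F$. $F$ is connected if the undirected graph underlying $\Gamma(F)$ is connected. *)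

From mathcomp Require Import all_boot.
From Stdlib Require Import Relation_Operators.
Set Implicit Arguments. Unset Strict Implicit. Unset Printing Implicit Defensive.

Section Graph.
Variables (V E : finType) (t h : E -> V).

Fixpoint dpath (x : V) (s : seq E) (y : V) : Prop :=
  match s with
  | [::] => x = y
  | e :: s' => t e = x /\ dpath (h e) s' y
  end.

Definition simple_graph : Prop :=
  forall e1 e2 : E, t e1 = t e2 -> h e1 = h e2 -> e1 = e2.

Definition acyclic : Prop :=
  forall (x : V) (s : seq E), dpath x s x -> s = [::].

Definition modular : Prop :=
  (forall e1 e2 : E, e1 <> e2 -> t e1 = t e2 ->
     exists f1 f2 : E, h f1 = h f2 /\ t f1 = h e1 /\ t f2 = h e2) /\
  (forall h1 h2 : E, h1 <> h2 -> h h1 = h h2 ->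
     exists g1 g2 : E, t g1 = t g2 /\ h g1 = t h1 /\ h g2 = t h2).

(* F is closed under D- and U-operations *)
Definition complete (F : {set E}) : Prop :=
  (forall e1 e2 f1 f2 : E, e1 \in F -> e2 \in F -> e1 <> e2 -> t e1 = t e2 ->
     h f1 = h f2 -> t f1 = h e1 -> t f2 = h e2 -> f1 \in F /\ f2 \in F) /\
  (forall f1 f2 e1 e2 : E, f1 \in F -> f2 \in F -> f1 <> f2 -> h f1 = h f2 ->
     t e1 = t e2 -> h e1 = t f1 -> h e2 = t f2 -> e1 \in F /\ e2 \in F).

Definition VF (F : {set E}) (x : V) : Prop :=
  exists2 e, e \in F & (t e = x \/ h e = x).

Definition uadj (F : {set E}) (x y : V) : Prop :=
  exists2 e, e \in F & ((t e = x /\ h e = y) \/ (t e = y /\ h e = x)).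

Definition connectedF (F : {set E}) : Prop :=
  forall x y : V, VF F x -> VF F y -> clos_refl_trans V (uadj F) x y.

Definition dpathF (F : {set E}) (x y : V) : Prop :=
  exists s : seq E, all (fun e => e \in F) s /\ dpath x s y.

End Graph.

(* If no edge of F leaves v, then every vertex of Gamma(F) has a directed path
   in Gamma(F) to v, in particular u does.  Reachability of v propagates
   backwards along an undirected path: across a forward edge x -> y trivially;
   across a backward edge e : y -> x by induction on a path e' :: s from y to v.
   If e <> e', completeness under the D-operation gives edges h(e) -> w and
   h(e') -> w of F, and by induction w reaches v, hence so does h(e).  When s
   is empty, e would leave v.  Statement (2) is statement (1) for the reversed
   graph, since reversing all edges exchanges the D- and U-operations. *)
From mathcomp Require Import all_boot.
From Stdlib Require Import Relation_Operators Operators_Properties.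
Set Implicit Arguments. Unset Strict Implicit.

Lemma clos_refl_trans_sub (A : Type) (R S : A -> A -> Prop) :
  (forall x y, R x y -> S x y) ->
  forall x y, clos_refl_trans A R x y -> clos_refl_trans A S x y.
Proof.
move=> RS x y; elim=> [a b /RS|a|a b c _ IHab _ IHbc].
- exact: rt_step.
- exact: rt_refl.
- exact: rt_trans IHab IHbc.
Qed.

Lemma dpath_cat (V E : finType) (t h : E -> V) x s1 z s2 y :
  dpath t h x s1 z -> dpath t h z s2 y -> dpath t h x (s1 ++ s2) y.
Proof.
elim: s1 x => [|e s IH] x /=; first by move=> ->.
by case=> te_x p1 p2; split; last exact: IH p1 p2.
Qed.

Section ReversedGraph.
Variables (V E : finType) (t h : E -> V) (F : {set E}).

Lemma dpath_rev x s y : dpath t h x s y -> dpath h t y (rev s) x.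
Proof.
elim: s x => [|e s IH] x /=; first by move=> ->.
case=> te_x p; rewrite rev_cons -cats1.
by apply: dpath_cat (IH _ p) _; split.
Qed.

Lemma dpathF_rev x y : dpathF t h F x y -> dpathF h t F y x.
Proof.
case=> s [sF p]; exists (rev s).
by rewrite all_rev; split; last exact: dpath_rev.
Qed.

Lemma modular_rev : modular t h -> modular h t.
Proof. by case. Qed.

Lemma complete_rev : complete t h F -> complete h t F.
Proof. by case. Qed.

Lemma VF_rev x : VF h t F x <-> VF t h F x.
Proof. by split; case=> e eF ?; exists e => //; apply/or_comm. Qed.

Lemma uadj_rev x y : uadj t h F x y -> uadj h t F x y.
Proof. by case=> e eF [[? ?]|[? ?]]; exists e => //; [right|left]. Qed.

Lemma connectedF_rev : connectedF t h F -> connectedF h t F.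
Proof.
move=> conn x y /VF_rev Fx /VF_rev Fy.
exact: clos_refl_trans_sub (@uadj_rev) _ _ (conn x y Fx Fy).
Qed.

End ReversedGraph.

Section ReachSink.
Variables (V E : finType) (t h : E -> V) (F : {set E}) (v : V).
Hypothesis modularD : forall e1 e2 : E, e1 <> e2 -> t e1 = t e2 ->
  exists f1 f2 : E, h f1 = h f2 /\ t f1 = h e1 /\ t f2 = h e2.
Hypothesis completeD : forall e1 e2 f1 f2 : E, e1 \in F -> e2 \in F ->
  e1 <> e2 -> t e1 = t e2 -> h f1 = h f2 -> t f1 = h e1 -> t f2 = h e2 ->
  f1 \in F /\ f2 \in F.
Hypothesis v_sink : forall f, f \in F -> t f <> v.

Lemma dpathF_sink_head x e :
  dpathF t h F x v -> e \in F -> t e = x -> dpathF t h F (h e) v.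
Proof.
case=> s [sF p]; elim: s x e sF p => [|e' s IH] x e /=.
  by move=> _ -> eF te_v; case: (v_sink eF te_v).
case/andP=> e'F sF [te'_x p] eF te_x.
have [->|/eqP ne] := eqVneq e e'; first by exists s.
have tee' : t e = t e' by rewrite te_x te'_x.
have [f1 [f2 [hf12 [tf1 tf2]]]] := modularD ne tee'.
have [f1F f2F] := completeD eF e'F ne tee' hf12 tf1 tf2.
have [s2 [s2F p2]] := IH _ f2 sF p f2F tf2.
by exists (f1 :: s2); rewrite /= f1F hf12.
Qed.

Lemma dpathF_sink_of_connect x :
  clos_refl_trans V (uadj t h F) x v -> dpathF t h F x v.
Proof.
elim/clos_refl_trans_ind_right=> [|{}x y [e eF [[<- <-]|[<- <-]]] yv _].
- by exists [::].
- by case: yv => s [sF p]; exists (e :: s); rewrite /= eF.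
- exact: dpathF_sink_head yv eF erefl.
Qed.

End ReachSink.

Lemma out_edge_of_not_dpathF (V E : finType) (t h : E -> V) (F : {set E})
    (u v : V) :
  modular t h -> complete t h F -> connectedF t h F ->
  VF t h F u -> VF t h F v -> ~ dpathF t h F u v ->
  exists2 f, f \in F & t f = v.
Proof.
move=> [modD _] [compD _] conn Fu Fv no_path.
case: (pickP (fun f => (f \in F) && (t f == v))) => [f /andP[fF /eqP] | none].
  by exists f.
case: no_path; apply: (dpathF_sink_of_connect modD compD) (conn u v Fu Fv).
by move=> f fF tf_v; move: (none f); rewrite fF tf_v eqxx.
Qed.

Theorem lemma3p2p5 (V E : finType) (t h : E -> V) (F : {set E}) (u v : V) :
  simple_graph t h -> acyclic t h -> modular t h ->
  complete t h F -> connectedF t h F ->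
  VF t h F u -> VF t h F v -> ~ dpathF t h F u v ->
  (exists2 f, f \in F & t f = v) /\ (exists2 e, e \in F & h e = u).
Proof.
move=> _ _ modG compF connF Fu Fv no_path; split.
  exact: out_edge_of_not_dpathF modG compF connF Fu Fv no_path.
apply: (out_edge_of_not_dpathF (u := v) (modular_rev modG) (complete_rev compF)
          (connectedF_rev connF)).
- exact/VF_rev.
- exact/VF_rev.
- by move/dpathF_rev.
Qed.
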